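(* Let $G>0$, $T>0$, let $F\colon\mathbb R\to\mathbb R^2$ be $T$-periodic and of class $C^1$, and let $a\in(0,1)$ be such that $m_a(t,x,p)=\tfrac12|x|^2-\tfrac12a^2$ is a curvature bound function for $v_\lambda$ for every $\lambda\in[0,1]$. Then there exists $b>0$ such that $\mathbb R\times(\Gamma_a\cap\Delta_b)$ is a bound set for $v_\lambda$ for all $\lambda\in[0,1]$.
   Context: Let $\Omega=\{(x,p)\in\mathbb R^2\times\mathbb R^2:|x|<1\}$ and for $\lambda\in[0,1]$ let $v_\lambda(t,x,p)=\Big(1,\ p,\ \Big(G\sqrt{1-|x|^2}-\tfrac{(x^Tp)^2}{1-|x|^2}-|p|^2\Big)x+\lambda\big((x^TF(t))x-F(t)\big)\Big)$ on $\mathbb R\times\Omega$, with local flow $\phi^\lambda$. A $C^2$ function $e$ on an open subset $W\subset\mathbb R\times\Omega$ is a curvature bound function for $v$ if for every $z\in W$ with $e(z)=0$: $De(z)v(z)=0$ implies $v(z)^TD^2e(z)v(z)+De(z)Dv(z)v(z)>0$ (derivatives in all variables $(t,x,p)$). For $0<a<1$, $b>0$: $\Gamma_a=\{(x,p)\in\mathbb R^2\times\mathbb R^2:|x|\le a\}$, $\Delta_b=\{(x,p)\in\mathbb R^2\times\mathbb R^2:|x|<1,\ b|x|+|p|\le b\}$. A closed set $E\subset\mathbb R\times\Omega$ is a bound set for $v_\lambda$ if for every $\epsilon>0$ there is no $z\in\partial E$ with $\phi^\lambda_s(z)\in E$ for all $s\in(-\epsilon,\epsilon)$. *)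

(* R : realType, points of R x R^2 x R^2 are 'rV[R]_5
   with coordinates z_0 = t, (z_1, z_2) = x, (z_3, z_4) = p. *)
From HB Require Import structures.
From mathcomp Require Import all_boot all_order all_algebra.
From mathcomp Require Import all_classical all_reals all_analysis.
Set Implicit Arguments. Unset Strict Implicit. Unset Printing Implicit Defensive.
Import Order.TTheory GRing.Theory Num.Theory.
Import numFieldNormedType.Exports.
Local Open Scope classical_set_scope.
Local Open Scope ring_scope.

Section Defs.
Variable R : realType.
Notation pt := 'rV[R]_5.

Definition zt (z : pt) : R := z ord0 (inord 0).
Definition zx1 (z : pt) : R := z ord0 (inord 1).
Definition zx2 (z : pt) : R := z ord0 (inord 2).
Definition zp1 (z : pt) : R := z ord0 (inord 3).
Definition zp2 (z : pt) : R := z ord0 (inord 4).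

Definition mk5 (a b c d e : R) : pt := \row_(i < 5) nth 0 [:: a; b; c; d; e] i.

Definition nx2 (z : pt) : R := zx1 z ^+ 2 + zx2 z ^+ 2.
Definition np2 (z : pt) : R := zp1 z ^+ 2 + zp2 z ^+ 2.
Definition xdotp (z : pt) : R := zx1 z * zp1 z + zx2 z * zp2 z.
Definition normx (z : pt) : R := Num.sqrt (nx2 z).
Definition normp (z : pt) : R := Num.sqrt (np2 z).

Definition RxOmega : set pt := [set z | normx z < 1].

Definition vfield (G : R) (F : R -> 'rV[R]_2) (lam : R) (z : pt) : pt :=
  let t := zt z in
  let F1 := F t ord0 (inord 0) in
  let F2 := F t ord0 (inord 1) in
  let xF := zx1 z * F1 + zx2 z * F2 in
  let c := G * Num.sqrt (1 - nx2 z) - (xdotp z) ^+ 2 / (1 - nx2 z) - np2 z in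
  mk5 1 (zp1 z) (zp2 z)
      (c * zx1 z + lam * (xF * zx1 z - F1))
      (c * zx2 z + lam * (xF * zx2 z - F2)).

Definition partial (V : normedModType R) (f : pt -> V) (i : 'I_5) (z : pt) : V :=
  derive f z (delta_mx ord0 i).

Definition C1_on (V : normedModType R) (W : set pt) (f : pt -> V) : Prop :=
  forall i : 'I_5, (forall z, W z -> derivable f z (delta_mx ord0 i)) /\
                   {within W, continuous (partial f i)}.
Definition C2_on (W : set pt) (f : pt -> R) : Prop :=
  C1_on W f /\ forall i : 'I_5, C1_on W (partial f i).

Definition De (e : pt -> R) (z w : pt) : R := derive e z w.
Definition D2e (e : pt -> R) (z w : pt) : R := derive (fun y => derive e y w) z w.
Definition Dv (v : pt -> pt) (z w : pt) : pt := derive v z w.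

Definition curvature_bound_function (W : set pt) (v : pt -> pt) (e : pt -> R) : Prop :=
  open W /\ W `<=` RxOmega /\ C2_on W e /\
  forall z, W z -> e z = 0 -> De e z (v z) = 0 ->
    0 < D2e e z (v z) + De e z (Dv v z (v z)).

(* a solution of z' = v(z) in R x Omega on (-eps, eps) through z at time 0,
   i.e. s |-> phi_s(z) on (-eps, eps) *)
Definition trajectory (v : pt -> pt) (z : pt) (eps : R) (g : R -> pt) : Prop :=
  g 0 = z /\
  forall s, - eps < s < eps ->
    RxOmega (g s) /\ derivable g s 1 /\ derive g s 1 = v (g s).

Definition bdry (E : set pt) : set pt := closure E `\` interior E.

Definition bound_set (v : pt -> pt) (E : set pt) : Prop :=
  closed E /\ E `<=` RxOmega /\
  forall eps, 0 < eps ->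
    ~ (exists z g, bdry E z /\ trajectory v z eps g /\
                   forall s, - eps < s < eps -> E (g s)).

Definition m_a (a : R) (z : pt) : R := nx2 z / 2 - a ^+ 2 / 2.

Definition Gamma_a (a : R) : set pt := [set z | normx z <= a].
Definition Delta_b (b : R) : set pt := [set z | normx z < 1 /\ b * normx z + normp z <= b].

Definition Tperiodic (T : R) (F : R -> 'rV[R]_2) : Prop := forall t, F (t + T) = F t.
Definition C1_fun (F : R -> 'rV[R]_2) : Prop :=
  (forall t, derivable F t 1) /\ continuous (fun t => derive F t 1).

End Defs.

(* The boundary of [R x (Gamma_a ∩ Delta_b)] consists of the points with [|x| = a]
   and those with [|x| < a] on the face [b |x| + |p| = b].  If a trajectory through
   such a point stayed in the set for [s] in [(-eps, eps)], a smooth function of [s]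
   would have a local maximum at [s = 0]: its first derivative would vanish there and
   its second would be [<= 0].  At [|x| = a] this function is [|x|^2], and the
   curvature bound hypothesis on [m_a] says exactly that its second derivative is
   positive.  On the face it is [face_phi b], which is [<= 0] on [Delta_b] and vanishes
   on the face; the vanishing of its first derivative forces [x.p = O(1/b)] (F and F'
   are bounded by periodicity), and then its second derivative is
   [8 b^6 (1 - |x|)^4 + O(b^4) > 0] once [b] is large. *)

From HB Require Import structures.
From mathcomp Require Import all_boot all_order all_algebra.
From mathcomp Require Import all_classical all_reals all_analysis.
From mathcomp Require Import ring lra.
Import Order.TTheory GRing.Theory Num.Theory.
Import numFieldNormedType.Exports.
Local Open Scope classical_set_scope.
Local Open Scope ring_scope.
Set Implicit Arguments. Unset Strict Implicit. Unset Printing Implicit Defensive.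

Section RealDerivatives.
Variable R : realType.
Implicit Types (f g : R -> R) (s df dg : R).

Lemma is_derive1_congr f g s df dg :
  is_derive s 1 f df -> f = g -> df = dg -> is_derive s 1 g dg.
Proof. by move=> H <- <-. Qed.

Lemma is_derive1_cst s (k : R) : is_derive s 1 (fun=> k) 0.
Proof. exact: is_derive_cst. Qed.

Lemma is_derive1D f g s df dg : is_derive s 1 f df -> is_derive s 1 g dg ->
  is_derive s 1 (fun u => f u + g u) (df + dg).
Proof. exact: is_deriveD. Qed.

Lemma is_derive1B f g s df dg : is_derive s 1 f df -> is_derive s 1 g dg ->
  is_derive s 1 (fun u => f u - g u) (df - dg).
Proof. exact: is_deriveB. Qed.

Lemma is_derive1M f g s df dg : is_derive s 1 f df -> is_derive s 1 g dg ->
  is_derive s 1 (fun u => f u * g u) (df * g s + f s * dg).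
Proof.
move=> Hf Hg; apply: is_derive_eq (is_deriveM Hf Hg) _.
by rewrite /GRing.scale /=; ring.
Qed.

Lemma is_derive1_sqr f s df : is_derive s 1 f df ->
  is_derive s 1 (fun u => f u ^+ 2) (2 * f s * df).
Proof.
move=> Hf; apply: is_derive1_congr (is_derive1M Hf Hf) _ _.
  by rewrite funeqE => u; rewrite expr2.
by ring.
Qed.

Lemma is_derive1V f s df : is_derive s 1 f df -> f s != 0 ->
  is_derive s 1 (fun u => (f u)^-1) (- df / f s ^+ 2).
Proof.
move=> Hf f0; apply: is_derive_eq (is_deriveV f0 Hf) _.
by rewrite /GRing.scale /=; field.
Qed.

Lemma is_derive1_sqrtr f s df : is_derive s 1 f df -> 0 < f s ->
  is_derive s 1 (fun u => Num.sqrt (f u)) (df / (2 * Num.sqrt (f s))).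
Proof.
move=> Hf f0; apply: is_derive_eq (is_derive1_comp (is_derive1_sqrt f0) Hf) _.
by rewrite mulrC.
Qed.

End RealDerivatives.

Section Coordinates.
Variable R : realType.
Notation pt := 'rV[R]_5.

Lemma derive_along_line (V : normedModType R) (f : pt -> V) (z w : pt) :
  'D_w f z = 'D_1 (fun h : R => f (h *: w + z)) 0.
Proof.
rewrite /derive; set dq1 := fun h => h^-1 *: _; set dq2 := fun h => h^-1 *: _.
suff -> : dq1 = dq2 by [].
by rewrite funeqE => h; rewrite /dq1 /dq2 /= addr0 scale0r add0r [_%:A]mulr1.
Qed.

Lemma is_derive_coord n (g : R -> 'rV[R]_n) (s : R) (i : 'I_n) :
  derivable g s 1 -> is_derive s 1 (fun u => g u ord0 i) ('D_1 g s ord0 i).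
Proof.
move=> dg; split; first exact: (derivable_mxP g s 1).1 dg ord0 i.
by rewrite (derive_mx dg) mxE.
Qed.

Lemma is_derive_line_coord (z w : pt) (i : 'I_5) (s : R) :
  is_derive s 1 (fun h : R => (h *: w + z) ord0 i) (w ord0 i).
Proof.
apply: is_derive1_congr
  (is_derive1D (is_derive1M (is_derive_id s 1) (is_derive1_cst s (w ord0 i)))
               (is_derive1_cst s (z ord0 i))) _ _.
  by rewrite funeqE => h; rewrite !mxE.
by rewrite /=; ring.
Qed.

Lemma forall_ord5 (P : 'I_5 -> Prop) :
  P (inord 0) -> P (inord 1) -> P (inord 2) -> P (inord 3) -> P (inord 4) ->
  forall j, P j.
Proof.
move=> P0 P1 P2 P3 P4 j; have -> : j = inord j by apply/val_inj; rewrite /= inordK.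
by case: j => [[|[|[|[|[|?]]]]] ?].
Qed.

End Coordinates.

Section VectorField.
Variable R : realType.
Notation pt := 'rV[R]_5.

Definition radial_coef (G x1 x2 p1 p2 : R) :=
  G * Num.sqrt (1 - (x1 ^+ 2 + x2 ^+ 2))
  - (x1 * p1 + x2 * p2) ^+ 2 / (1 - (x1 ^+ 2 + x2 ^+ 2)) - (p1 ^+ 2 + p2 ^+ 2).

Definition radial_coef_deriv (G x1 x2 p1 p2 dx1 dx2 dp1 dp2 : R) :=
  let r2 := x1 ^+ 2 + x2 ^+ 2 in let dr2 := 2 * (x1 * dx1 + x2 * dx2) in
  let q := x1 * p1 + x2 * p2 in let dq := dx1 * p1 + x1 * dp1 + dx2 * p2 + x2 * dp2 in
  - G * dr2 / (2 * Num.sqrt (1 - r2)) - (2 * q * dq / (1 - r2) + q ^+ 2 * dr2 / (1 - r2) ^+ 2)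
  - 2 * (p1 * dp1 + p2 * dp2).

Lemma is_derive_radial_coef G (X1 X2 P1 P2 : R -> R) (s dx1 dx2 dp1 dp2 : R) :
  is_derive s 1 X1 dx1 -> is_derive s 1 X2 dx2 ->
  is_derive s 1 P1 dp1 -> is_derive s 1 P2 dp2 ->
  X1 s ^+ 2 + X2 s ^+ 2 < 1 ->
  is_derive s 1 (fun u => radial_coef G (X1 u) (X2 u) (P1 u) (P2 u))
    (radial_coef_deriv G (X1 s) (X2 s) (P1 s) (P2 s) dx1 dx2 dp1 dp2).
Proof.
move=> dX1 dX2 dP1 dP2 x_lt1.
have r2_lt1 : 0 < 1 - (X1 s ^+ 2 + X2 s ^+ 2) by rewrite subr_gt0.
have d1r2 := is_derive1B (is_derive1_cst s 1)
  (is_derive1D (is_derive1_sqr dX1) (is_derive1_sqr dX2)).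
have dq := is_derive1D (is_derive1M dX1 dP1) (is_derive1M dX2 dP2).
have dP := is_derive1D (is_derive1_sqr dP1) (is_derive1_sqr dP2).
have dc := is_derive1B (is_derive1B
  (is_derive1M (is_derive1_cst s G) (is_derive1_sqrtr d1r2 r2_lt1))
  (is_derive1M (is_derive1_sqr dq) (is_derive1V d1r2 (lt0r_neq0 r2_lt1)))) dP.
apply: is_derive1_congr dc _ _ => //.
rewrite /radial_coef_deriv /=; field.
by rewrite !lt0r_neq0 // sqrtr_gt0.
Qed.

(* [accel G lam x p F1 F2 X Fk] is the [p_k]-component of [vfield] when
   [X = x_k] and [Fk = F_k]; [accel_deriv] is its derivative along a curve
   with velocity [(dt, dx1, dx2, dp1, dp2)], [dX = dx_k], and [D1 D2 Dk] the
   corresponding components of [F']. *)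
Definition accel (G lam x1 x2 p1 p2 F1 F2 X Fk : R) :=
  radial_coef G x1 x2 p1 p2 * X + lam * ((x1 * F1 + x2 * F2) * X - Fk).

Definition accel_deriv (G lam x1 x2 p1 p2 F1 F2 D1 D2 dt dx1 dx2 dp1 dp2 X dX Fk Dk : R) :=
  radial_coef_deriv G x1 x2 p1 p2 dx1 dx2 dp1 dp2 * X + radial_coef G x1 x2 p1 p2 * dX
  + lam * ((dx1 * F1 + x1 * (D1 * dt) + dx2 * F2 + x2 * (D2 * dt)) * X
           + (x1 * F1 + x2 * F2) * dX - Dk * dt).

Lemma is_derive_forcing (F : R -> 'rV[R]_2) (T : R -> R) (s dt : R) k :
  is_derive s 1 T dt -> derivable F (T s) 1 ->
  is_derive s 1 (fun u => F (T u) ord0 k) ('D_1 F (T s) ord0 k * dt).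
Proof. by move=> dT dF; exact: is_derive1_comp (is_derive_coord k dF) dT. Qed.

Lemma is_derive_accel G lam (F : R -> 'rV[R]_2) (T X1 X2 P1 P2 X : R -> R)
    (s dt dx1 dx2 dp1 dp2 dX : R) (k : 'I_2) :
  is_derive s 1 T dt ->
  is_derive s 1 X1 dx1 -> is_derive s 1 X2 dx2 ->
  is_derive s 1 P1 dp1 -> is_derive s 1 P2 dp2 -> is_derive s 1 X dX ->
  derivable F (T s) 1 -> X1 s ^+ 2 + X2 s ^+ 2 < 1 ->
  is_derive s 1 (fun u => accel G lam (X1 u) (X2 u) (P1 u) (P2 u)
       (F (T u) ord0 (inord 0)) (F (T u) ord0 (inord 1)) (X u) (F (T u) ord0 k))
    (accel_deriv G lam (X1 s) (X2 s) (P1 s) (P2 s)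
       (F (T s) ord0 (inord 0)) (F (T s) ord0 (inord 1))
       ('D_1 F (T s) ord0 (inord 0)) ('D_1 F (T s) ord0 (inord 1))
       dt dx1 dx2 dp1 dp2 (X s) dX (F (T s) ord0 k) ('D_1 F (T s) ord0 k)).
Proof.
move=> dT dX1 dX2 dP1 dP2 dXk dF x_lt1.
have dc := is_derive_radial_coef G dX1 dX2 dP1 dP2 x_lt1.
have dxF := is_derive1D (is_derive1M dX1 (is_derive_forcing (inord 0) dT dF))
                        (is_derive1M dX2 (is_derive_forcing (inord 1) dT dF)).
have dV := is_derive1D (is_derive1M dc dXk) (is_derive1M (is_derive1_cst s lam)
  (is_derive1B (is_derive1M dxF dXk) (is_derive_forcing k dT dF))).
by apply: is_derive1_congr dV _ _ => //; rewrite /accel_deriv /=; ring.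
Qed.

Section Components.
Variables (G : R) (F : R -> 'rV[R]_2) (lam : R) (z : pt).

Lemma vfield0E : vfield G F lam z ord0 (inord 0) = 1.
Proof. by rewrite mxE inordK. Qed.
Lemma vfield1E : vfield G F lam z ord0 (inord 1) = zp1 z.
Proof. by rewrite mxE inordK. Qed.
Lemma vfield2E : vfield G F lam z ord0 (inord 2) = zp2 z.
Proof. by rewrite mxE inordK. Qed.
Lemma vfield3E : vfield G F lam z ord0 (inord 3) =
  accel G lam (zx1 z) (zx2 z) (zp1 z) (zp2 z)
    (F (zt z) ord0 (inord 0)) (F (zt z) ord0 (inord 1)) (zx1 z) (F (zt z) ord0 (inord 0)).
Proof. by rewrite mxE inordK. Qed.
Lemma vfield4E : vfield G F lam z ord0 (inord 4) =
  accel G lam (zx1 z) (zx2 z) (zp1 z) (zp2 z)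
    (F (zt z) ord0 (inord 0)) (F (zt z) ord0 (inord 1)) (zx2 z) (F (zt z) ord0 (inord 1)).
Proof. by rewrite mxE inordK. Qed.

End Components.

Lemma is_derive_vfield_accel G F lam (g : R -> pt) (s : R) (d : 'I_5 -> R) :
  (forall i, is_derive s 1 (fun u => g u ord0 i) (d i)) ->
  derivable F (zt (g s)) 1 -> nx2 (g s) < 1 ->
  let D k := ('D_1 F (zt (g s)) : 'rV[R]_2) ord0 k in
  let accel_deriv_k X k := accel_deriv G lam (zx1 (g s)) (zx2 (g s)) (zp1 (g s)) (zp2 (g s))
       (F (zt (g s)) ord0 (inord 0)) (F (zt (g s)) ord0 (inord 1)) (D (inord 0)) (D (inord 1))
       (d (inord 0)) (d (inord 1)) (d (inord 2)) (d (inord 3)) (d (inord 4))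
       (g s ord0 X) (d X) (F (zt (g s)) ord0 k) (D k) in
  is_derive s 1 (fun u => vfield G F lam (g u) ord0 (inord 3))
    (accel_deriv_k (inord 1) (inord 0)) /\
  is_derive s 1 (fun u => vfield G F lam (g u) ord0 (inord 4))
    (accel_deriv_k (inord 2) (inord 1)).
Proof.
move=> dg dF x_lt1 D accel_deriv_k.
have dV k X := is_derive_accel G lam k (dg (inord 0)) (dg (inord 1)) (dg (inord 2))
  (dg (inord 3)) (dg (inord 4)) (dg X) dF x_lt1.
split.
- apply: is_derive1_congr (dV (inord 0) (inord 1)) _ _ => //.
  by rewrite funeqE => u; rewrite vfield3E.
- apply: is_derive1_congr (dV (inord 1) (inord 2)) _ _ => //.
  by rewrite funeqE => u; rewrite vfield4E.
Qed.

Lemma vfield_derivable G F lam (z w : pt) :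
  derivable F (zt z) 1 -> nx2 z < 1 -> derivable (vfield G F lam) z w.
Proof.
move=> dF x_lt1; apply/derivable1P/derivable_mxP => i j.
have -> : i = ord0 by apply/val_inj; case: i => [[]].
have dline := fun k => is_derive_line_coord z w k 0.
have z0 : 0 *: w + z = z by rewrite scale0r add0r.
have := @is_derive_vfield_accel G F lam (fun h => h *: w + z) 0 _ dline.
rewrite /= z0 => /(_ dF x_lt1) [dV3 dV4].
move: j; apply: forall_ord5; [| | |by case: dV3|by case: dV4].
- suff : is_derive (0 : R) 1 (fun u => vfield G F lam (u *: w + z) ord0 (inord 0)) 0 by case.
  apply: is_derive1_congr (is_derive1_cst 0 1) _ _ => //.
  by rewrite funeqE => u; rewrite vfield0E.
- suff : is_derive (0 : R) 1 (fun u => vfield G F lam (u *: w + z) ord0 (inord 1))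
    (w ord0 (inord 3)) by case.
  apply: is_derive1_congr (dline (inord 3)) _ _ => //.
  by rewrite funeqE => u; rewrite vfield1E.
- suff : is_derive (0 : R) 1 (fun u => vfield G F lam (u *: w + z) ord0 (inord 2))
    (w ord0 (inord 4)) by case.
  apply: is_derive1_congr (dline (inord 4)) _ _ => //.
  by rewrite funeqE => u; rewrite vfield2E.
Qed.

Lemma Dvfield_x G F lam (z w : pt) : derivable F (zt z) 1 -> nx2 z < 1 ->
  Dv (vfield G F lam) z w ord0 (inord 1) = w ord0 (inord 3) /\
  Dv (vfield G F lam) z w ord0 (inord 2) = w ord0 (inord 4).
Proof.
move=> dF x_lt1; rewrite /Dv (derive_mx (@vfield_derivable G F lam z w dF x_lt1)) !mxE.
rewrite !derive_along_line; split; apply: derive_val.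
- apply: is_derive1_congr (is_derive_line_coord z w (inord 3) 0) _ _ => //.
  by rewrite funeqE => u; rewrite vfield1E.
- apply: is_derive1_congr (is_derive_line_coord z w (inord 4) 0) _ _ => //.
  by rewrite funeqE => u; rewrite vfield2E.
Qed.

End VectorField.

Section CurvatureOfMa.
Variable R : realType.
Notation pt := 'rV[R]_5.

Lemma De_m_a (a : R) (z w : pt) :
  De (m_a a) z w = zx1 z * w ord0 (inord 1) + zx2 z * w ord0 (inord 2).
Proof.
rewrite /De derive_along_line; apply: derive_val.
have dx1 := is_derive_line_coord z w (inord 1) 0.
have dx2 := is_derive_line_coord z w (inord 2) 0.
apply: is_derive1_congr (is_derive1B (is_derive1M (is_derive1D (is_derive1_sqr dx1)
  (is_derive1_sqr dx2)) (is_derive1_cst 0 2^-1)) (is_derive1_cst 0 (a ^+ 2 / 2))) _ _ => //.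
by rewrite /= scale0r add0r /zx1 /zx2; field.
Qed.

Lemma D2e_m_a (a : R) (z w : pt) :
  D2e (m_a a) z w = w ord0 (inord 1) ^+ 2 + w ord0 (inord 2) ^+ 2.
Proof.
rewrite /D2e; under eq_fun do rewrite -/(De _ _ _) De_m_a.
rewrite derive_along_line; apply: derive_val.
have dx1 := is_derive_line_coord z w (inord 1) 0.
have dx2 := is_derive_line_coord z w (inord 2) 0.
apply: is_derive1_congr (is_derive1D (is_derive1M dx1 (is_derive1_cst 0 (w ord0 (inord 1))))
  (is_derive1M dx2 (is_derive1_cst 0 (w ord0 (inord 2))))) _ _ => //.
by rewrite /=; ring.
Qed.

End CurvatureOfMa.

Section SecondDerivativeTest.
Variable R : realType.

Lemma derive_gt0_right (g : R -> R) (d : R) : g 0 = 0 -> is_derive (0 : R) 1 g d -> 0 < d ->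
  exists2 e, 0 < e & forall t, 0 < t < e -> 0 < g t.
Proof.
move=> g0 dg d_gt0.
have quot_cvg : (fun h => h^-1 *: ((g \o shift 0) (h *: 1) - g 0)) @ 0^' --> d.
  by case: dg => g_derivable <-.
have /nbhs_ballP[e e_gt0 quot_gt] := @cvgr_gt R _ _ _ _ _ quot_cvg (d / 2) ltac:(lra).
exists e => // t /andP[t_gt0 t_lt_e].
have /quot_gt /(_ (lt0r_neq0 t_gt0)) : ball (0 : R) e t.
  by rewrite /ball /= sub0r normrN gtr0_norm.
rewrite /= addr0 /GRing.scale /= mulr1 g0 subr0 => quot_t.
have : 0 < t^-1 * g t by lra.
by rewrite pmulr_rgt0 // invr_gt0.
Qed.

Lemma local_max_second_derivative (f f' : R -> R) (eps d : R) : 0 < eps ->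
  (forall s, - eps < s < eps -> is_derive s 1 f (f' s)) ->
  (forall s, - eps < s < eps -> f s <= f 0) ->
  is_derive (0 : R) 1 f' d -> f' 0 = 0 /\ d <= 0.
Proof.
move=> eps_gt0 df f_max df'.
have in_eps s : s \in `]- eps, eps[ -> - eps < s < eps by rewrite in_itv.
have f'0 : f' 0 = 0.
  have df0 : is_derive (0 : R) 1 f (f' 0) by apply: df; apply/andP; split; lra.
  have crit : is_derive (0 : R) 1 f 0.
    apply: (@derive1_at_max R f (- eps) eps 0); first lra.
    - by move=> t /in_eps /df [].
    - by rewrite in_itv /=; apply/andP; split; lra.
    - by move=> t /in_eps /f_max.
  by rewrite -(@derive_val _ _ _ _ _ _ _ df0) (@derive_val _ _ _ _ _ _ _ crit).
split => //; rewrite leNgt; apply/negP => d_gt0.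
have [e e_gt0 f'_gt0] := derive_gt0_right f'0 df' d_gt0.
pose h := Num.min e eps / 2.
have h_gt0 : 0 < h by rewrite divr_gt0 // lt_min e_gt0 eps_gt0.
have [h_lt_e h_lt_eps] : h < e /\ h < eps.
  have : Num.min e eps <= e by rewrite ge_min lexx.
  have : Num.min e eps <= eps by rewrite ge_min lexx orbT.
  by rewrite /h; lra.
have [c] : exists2 c, c \in `]0, h[ & f h - f 0 = f' c * (h - 0).
  apply: MVT => // [x|].
    by rewrite in_itv /= => /andP[? ?]; apply: df; apply/andP; split; lra.
  apply: derivable_within_continuous => x; rewrite in_itv /= => /andP[? ?].
  by case: (df x) => //; apply/andP; split; lra.
rewrite in_itv /= => /andP[c_gt0 c_lt_h] f_incr.
have := f'_gt0 c ltac:(apply/andP; split; lra).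
have := f_max h ltac:(apply/andP; split; lra).
nra.
Qed.

End SecondDerivativeTest.

Section PeriodicBounds.
Variable R : realType.

Lemma periodic_natmul (T : Type) (f : R -> T) (P : R) : (forall t, f (t + P) = f t) ->
  forall (k : nat) u, f (u + k%:R * P) = f u.
Proof.
move=> fP; elim=> [|k IHk] u; first by rewrite mul0r addr0.
by rewrite -addn1 natrD mulrDl mul1r addrA fP IHk.
Qed.

Lemma periodic_intmul (T : Type) (f : R -> T) (P : R) : (forall t, f (t + P) = f t) ->
  forall (n : int) u, f (u + n%:~R * P) = f u.
Proof.
move=> fP [k|k] u; first exact: periodic_natmul.
by rewrite NegzE mulrNz mulNr -[in RHS](subrK (k.+1%:R * P) u) periodic_natmul.
Qed.

Lemma periodic_continuous_bounded (V : normedModType R) (f : R -> V) (P : R) :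
  0 < P -> continuous f -> (forall t, f (t + P) = f t) ->
  exists M, forall t, `|f t| <= M.
Proof.
move=> P_gt0 f_cont fP.
have [c _ c_max] := @EVT_max R (fun t => `|f t|) 0 P (ltW P_gt0)
  (continuous_subspaceT (fun x => continuous_comp (f_cont x) (@norm_continuous _ V _))).
exists `|f c| => t; pose n := Num.floor (t / P).
have /andP[n_le n_gt] := floor_itv (t / P); rewrite -/n in n_le n_gt.
rewrite -(subrK (n%:~R * P) t) periodic_intmul //; apply: c_max.
rewrite ler_pdivlMr // in n_le; rewrite ltr_pdivrMr // intrD mulrDl mul1r in n_gt.
by rewrite in_itv /=; apply/andP; split; lra.
Qed.

Lemma derive1_periodic (V : normedModType R) (f : R -> V) (P t : R) :
  (forall t, f (t + P) = f t) -> 'D_1 f (t + P) = 'D_1 f t.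
Proof.
move=> fP; rewrite /derive; set dq1 := fun h => h^-1 *: _; set dq2 := fun h => h^-1 *: _.
suff -> : dq1 = dq2 by [].
by rewrite funeqE => h; rewrite /dq1 /dq2 /= /shift /= addrA !fP.
Qed.

Lemma entry_le_norm m n (A : 'M[R]_(m, n)) i j : `|A i j| <= `|A|.
Proof.
have -> : `|A| = mx_norm A by [].
by rewrite mx_normrE; exact: (le_bigmax 0 (fun ij : 'I_m * 'I_n => `|A ij.1 ij.2|) (i, j)).
Qed.

Lemma periodic_C1_bounded (F : R -> 'rV[R]_2) (P : R) : 0 < P -> Tperiodic P F -> C1_fun F ->
  exists M, 0 <= M /\
    forall t (k : 'I_2), `|F t ord0 k| <= M /\ `|'D_1 F t ord0 k| <= M.
Proof.
move=> P_gt0 FP [dF dF_cont].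
have F_cont : continuous F.
  by move=> t; apply/differentiable_continuous/derivable1_diffP.
have [M1 FM1] := periodic_continuous_bounded P_gt0 F_cont FP.
have [M2 FM2] := periodic_continuous_bounded P_gt0 dF_cont (fun t => derive1_periodic t FP).
exists (Num.max M1 M2); split; first by rewrite le_max (le_trans _ (FM1 0)).
move=> t k; rewrite !le_max.
by rewrite (le_trans (entry_le_norm _ _ _) (FM1 t)) (le_trans (entry_le_norm _ _ _) (FM2 t)) orbT.
Qed.

End PeriodicBounds.

Section BoundSetGeometry.
Variable R : realType.
Notation pt := 'rV[R]_5.

Lemma continuous_normx : continuous (@normx R).
Proof.
move=> z; apply: continuous_comp (@sqrt_continuous R _).
by rewrite /nx2; apply: continuousD; apply: continuousM; exact: coord_continuous.
Qed.

Lemma continuous_normp : continuous (@normp R).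
Proof.
move=> z; apply: continuous_comp (@sqrt_continuous R _).
by rewrite /np2; apply: continuousD; apply: continuousM; exact: coord_continuous.
Qed.

Lemma continuous_face (b : R) : continuous (fun z : pt => b * normx z + normp z).
Proof.
move=> z; apply: (@continuousD _ _ _ (fun y => b * normx y) (@normp R)).
  by apply: (@continuousM _ _ (fun=> b)); [exact: cst_continuous | exact: continuous_normx].
exact: continuous_normp.
Qed.

Lemma closed_Gamma_Delta (a b : R) : a < 1 -> closed (Gamma_a a `&` Delta_b b).
Proof.
move=> a_lt1.
have -> : Gamma_a a `&` Delta_b b = @normx R @^-1` [set x | x <= a]
    `&` (fun z : pt => b * normx z + normp z) @^-1` [set x | x <= b].
  apply/seteqP; split => z /=; first by case=> ? [].
  by case=> x_le_a ?; do !split => //; exact: le_lt_trans x_le_a a_lt1.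
apply: closedI; apply: preimage_closed; try exact: closed_le.
- by move=> z _; exact: continuous_normx.
- by move=> z _; exact: continuous_face.
Qed.

Lemma interior_Gamma_Delta (a b : R) (z : pt) : a < 1 ->
  normx z < a -> b * normx z + normp z < b -> interior (Gamma_a a `&` Delta_b b) z.
Proof.
move=> a_lt1 x_lt_a face_lt_b.
pose U := @normx R @^-1` [set x | x < a]
  `&` (fun z : pt => b * normx z + normp z) @^-1` [set x | x < b].
have U_open : open U.
  apply: openI; apply: open_comp; try exact: open_lt.
  - by move=> y _; exact: continuous_normx.
  - by move=> y _; exact: continuous_face.
apply: (@filterS _ _ _ U); last by apply: open_nbhs_nbhs; split.
move=> y [/= y_lt_a y_lt_b]; split; first exact: ltW.
by split; [exact: lt_trans y_lt_a a_lt1 | exact: ltW].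
Qed.

Lemma bdry_Gamma_Delta (a b : R) (z : pt) : a < 1 -> bdry (Gamma_a a `&` Delta_b b) z ->
  (Gamma_a a `&` Delta_b b) z /\
  (normx z = a \/ normx z < a /\ b * normx z + normp z = b).
Proof.
move=> a_lt1 [z_cl z_int].
have zE : (Gamma_a a `&` Delta_b b) z.
  by move: z_cl; rewrite -(closure_id _).1 //; exact: closed_Gamma_Delta.
split => //; case: zE => [/= x_le_a [_ face_le_b]].
have [x_lt_a|] := ltrP (normx z) a; last by left; apply/eqP; rewrite eq_le x_le_a.
right; split => //.
have [face_lt_b|] := ltrP (b * normx z + normp z) b; last by move=> ?; apply/eqP; rewrite eq_le face_le_b.
by case: z_int; exact: interior_Gamma_Delta.
Qed.

End BoundSetGeometry.

Section NormBounds.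
Variable R : realDomainType.
Implicit Types u w U W : R.

Lemma ler_normM_bound u w U W : `|u| <= U -> `|w| <= W -> `|u * w| <= U * W.
Proof. by move=> uU wW; rewrite normrM ler_pM. Qed.

Lemma ler_normD_bound u w U W : `|u| <= U -> `|w| <= W -> `|u + w| <= U + W.
Proof. by move=> uU wW; exact: le_trans (ler_normD _ _) (lerD uU wW). Qed.

Lemma ler_normN_bound u U : `|u| <= U -> `|- u| <= U.
Proof. by rewrite normrN. Qed.

End NormBounds.

Section FaceEstimate.
Variable R : realType.

Definition Cbig (G M L k : R) :=
  let C3 := G + k ^+ 2 * L + k + 4 * M in
  let C4 := (2 * k + 2 * C3) ^+ 2 in
  let C5 := 2 + G + k ^+ 2 * L + 2 * M in
  let C6 := G * L * k ^+ 2 + 2 * k ^+ 2 * C5 * L + 2 * k ^+ 4 * L ^+ 2 + 2 * k * C3 in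
  let C7 := C6 + k ^+ 2 * L + 2 * M * k + 6 * M in
  (k ^+ 2 * L + 2 * M) + C4 / 4 + C7.

(* Data at a point of the face: [xx, pp, xp] are [|x|^2, |p|^2, x.p], [S, iS, iv]
   are [sqrt (1 - |x|^2)], its inverse and [1 / (1 - |x|^2)], [V1, V2] is [p'], and
   [dxp, dc, dV1, dV2, dpV, dA] are derivatives along the trajectory, of which [phi2]
   is the second derivative of [face_phi b] and [dphi0] the vanishing of the first. *)
Variables (G lam a b M L k : R) (x1 x2 p1 p2 F1 F2 D1 D2 : R).
Variables (r rho S iS iv xx pp xp xF pF xD pD c V1 V2 pV dxp dc dV1 dV2 dpV dA phi2 : R).

Hypotheses (G_gt0 : 0 < G) (lam_ge0 : 0 <= lam) (lam_le1 : lam <= 1).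
Hypotheses (a_gt0 : 0 < a) (a_lt1 : a < 1) (M_ge0 : 0 <= M).
Hypotheses (F1_le : `|F1| <= M) (F2_le : `|F2| <= M) (D1_le : `|D1| <= M) (D2_le : `|D2| <= M).
Hypotheses (L_def : L * (1 - a ^+ 2) = 1) (k_def : k * (1 - a) = 8 * M).
Hypotheses (b_ge1 : 1 <= b) (k_le_b : k <= b) (b_large : Cbig G M L k < b ^+ 2 * (1 - a) ^+ 4).
Hypotheses (r_ge0 : 0 <= r) (r_le_a : r <= a) (r_sq : r ^+ 2 = xx).
Hypotheses (rho_sq : rho ^+ 2 = pp) (on_face : b * r + rho = b).
Hypotheses (S_gt0 : 0 < S) (S_sq : S ^+ 2 = 1 - xx) (iS_def : S * iS = 1) (iv_def : (1 - xx) * iv = 1).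
Hypotheses (xx_def : xx = x1 ^+ 2 + x2 ^+ 2) (pp_def : pp = p1 ^+ 2 + p2 ^+ 2).
Hypotheses (xp_def : xp = x1 * p1 + x2 * p2).
Hypotheses (xF_def : xF = x1 * F1 + x2 * F2) (pF_def : pF = p1 * F1 + p2 * F2).
Hypotheses (xD_def : xD = x1 * D1 + x2 * D2) (pD_def : pD = p1 * D1 + p2 * D2).
Hypotheses (c_def : c = G * S - xp ^+ 2 * iv - pp).
Hypotheses (V1_def : V1 = c * x1 + lam * (xF * x1 - F1)) (V2_def : V2 = c * x2 + lam * (xF * x2 - F2)).
Hypotheses (pV_def : pV = p1 * V1 + p2 * V2) (dxp_def : dxp = p1 * p1 + x1 * V1 + p2 * p2 + x2 * V2).
Hypothesis dc_def : dc = - (G * xp * iS) - 2 * xp * dxp * iv - 2 * xp ^+ 3 * iv ^+ 2 - 2 * pV.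
Hypothesis dV1_def : dV1 = dc * x1 + c * p1 + lam * ((pF + xD) * x1 + xF * p1 - D1).
Hypothesis dV2_def : dV2 = dc * x2 + c * p2 + lam * ((pF + xD) * x2 + xF * p2 - D2).
Hypotheses (dpV_def : dpV = V1 ^+ 2 + V2 ^+ 2 + p1 * dV1 + p2 * dV2) (dA_def : dA = 2 * b ^+ 2 * xp - 2 * pV).
Hypothesis dphi0 : 8 * b ^+ 4 * xp - 2 * (b ^+ 2 * (1 + xx) - pp) * dA = 0.
Hypothesis phi2_def :
  phi2 = 8 * b ^+ 4 * dxp - 2 * dA ^+ 2 - 2 * (b ^+ 2 * (1 + xx) - pp) * (2 * b ^+ 2 * dxp - 2 * dpV).

Let b_gt0 : 0 < b. Proof. by move: b_ge1; lra. Qed.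
Let b2_ge1 : 1 <= b ^+ 2. Proof. by move: b_ge1; nra. Qed.
Let one_sub_a_gt0 : 0 < 1 - a. Proof. by move: a_lt1; lra. Qed.
Let r_le1 : r <= 1. Proof. by move: r_le_a a_lt1; lra. Qed.
Let pp_face : pp = b ^+ 2 * (1 - r) ^+ 2.
Proof. by rewrite -rho_sq (_ : rho = b * (1 - r)); [ring | move: on_face; lra]. Qed.
Let xx_ge0 : 0 <= xx. Proof. by rewrite -r_sq sqr_ge0. Qed.
Let xx_le_a2 : xx <= a ^+ 2. Proof. by rewrite -r_sq; move: r_ge0 r_le_a; nra. Qed.
Let xx_le1 : xx <= 1. Proof. by move: xx_le_a2 a_gt0 a_lt1; nra. Qed.
Let a2_lt1 : 0 < 1 - a ^+ 2. Proof. by move: a_gt0 a_lt1; nra. Qed.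
Let L_ge1 : 1 <= L. Proof. by move: L_def a2_lt1 a_gt0; nra. Qed.
Let iv_gt0 : 0 < iv. Proof. by move: iv_def xx_le_a2 a2_lt1; nra. Qed.
Let iv_le_L : iv <= L. Proof. by move: iv_def L_def xx_le_a2 a2_lt1 iv_gt0; nra. Qed.
Let S_le1 : S <= 1. Proof. by move: S_sq S_gt0 xx_ge0; nra. Qed.
Let iS_gt0 : 0 < iS. Proof. by move: iS_def S_gt0; nra. Qed.
Let iS_le_L : iS <= L.
Proof.
have S_ge : 1 - xx <= S by move: S_sq S_gt0 S_le1; nra.
have : iS * (1 - a ^+ 2) <= 1 by move: iS_def S_ge xx_le_a2 iS_gt0; nra.
by move: L_def a2_lt1; nra.
Qed.
Let pp_ge0 : 0 <= pp. Proof. by rewrite pp_def addr_ge0 // sqr_ge0. Qed.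
Let pp_le_b2 : pp <= b ^+ 2. Proof. by rewrite pp_face; move: r_ge0 r_le_a a_lt1 b_gt0; nra. Qed.
Let x1_le1 : `|x1| <= 1.
Proof. by rewrite ler_norml; apply/andP; split; move: xx_def xx_le1; nra. Qed.
Let x2_le1 : `|x2| <= 1.
Proof. by rewrite ler_norml; apply/andP; split; move: xx_def xx_le1; nra. Qed.
Let p1_le_b : `|p1| <= b.
Proof. by rewrite ler_norml; apply/andP; split; move: pp_def pp_le_b2 b_gt0; nra. Qed.
Let p2_le_b : `|p2| <= b.
Proof. by rewrite ler_norml; apply/andP; split; move: pp_def pp_le_b2 b_gt0; nra. Qed.
Let xF_le : `|xF| <= 2 * M.
Proof.
have := ler_normD_bound (ler_normM_bound x1_le1 F1_le) (ler_normM_bound x2_le1 F2_le).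
by rewrite xF_def; lra.
Qed.
Let pF_le : `|pF| <= 2 * b * M.
Proof.
have := ler_normD_bound (ler_normM_bound p1_le_b F1_le) (ler_normM_bound p2_le_b F2_le).
by rewrite pF_def; lra.
Qed.
Let xD_le : `|xD| <= 2 * M.
Proof.
have := ler_normD_bound (ler_normM_bound x1_le1 D1_le) (ler_normM_bound x2_le1 D2_le).
by rewrite xD_def; lra.
Qed.
Let pD_le : `|pD| <= 2 * b * M.
Proof.
have := ler_normD_bound (ler_normM_bound p1_le_b D1_le) (ler_normM_bound p2_le_b D2_le).
by rewrite pD_def; lra.
Qed.
Let xp_sq_le : xp ^+ 2 <= xx * pp.
Proof.
rewrite xp_def xx_def pp_def -subr_ge0.
by rewrite (_ : _ - _ = (x1 * p2 - x2 * p1) ^+ 2); [exact: sqr_ge0 | ring].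
Qed.
Let A_face : b ^+ 2 * (1 + xx) - pp = 2 * b ^+ 2 * r.
Proof. by rewrite pp_face -r_sq; ring. Qed.

Let eightM_le : 8 * M <= b ^+ 2 * (1 - a).
Proof.
have : b <= b ^+ 2 by move: b_ge1; nra.
by rewrite -k_def; move: k_le_b one_sub_a_gt0; nra.
Qed.
Let k_ge0 : 0 <= k. Proof. by move: k_def one_sub_a_gt0 M_ge0; nra. Qed.
Let rlam_le1 : `|r * lam| <= 1.
Proof. by rewrite ler_norml; apply/andP; split; move: r_ge0 r_le1 lam_ge0 lam_le1; nra. Qed.
Let lam_xF_le : `|lam * xF * (xx - 1)| <= 2 * M.
Proof.
have : `|(xx - 1) * lam| <= 1.
  by rewrite ler_norml; apply/andP; split; move: lam_ge0 lam_le1 xx_ge0 xx_le1; nra.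
move/(ler_normM_bound xF_le); rewrite mulr1.
by rewrite (_ : lam * xF * _ = xF * ((xx - 1) * lam)); last ring.
Qed.
Let pV_radial : pV = c * xp + lam * (xF * xp - pF).
Proof. by rewrite pV_def V1_def V2_def xp_def xF_def pF_def; ring. Qed.

Lemma face_tangency : b ^+ 2 * xp * (1 - r) + r * pV = 0.
Proof.
have : 8 * b ^+ 2 * (b ^+ 2 * xp * (1 - r) + r * pV) = 0.
  by rewrite -dphi0 A_face dA_def; ring.
move/eqP; rewrite mulf_eq0 => /orP[|/eqP //].
by rewrite mulf_eq0 pnatr_eq0 /= expf_eq0 /= gt_eqF.
Qed.

Let K := b ^+ 2 * (1 - r) + r * c + r * lam * xF.

Lemma xp_K : xp * K = r * lam * pF.
Proof.
apply/eqP; rewrite -subr_eq0 -face_tangency pV_radial /K.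
by apply/eqP; ring.
Qed.

(* Bounding [c] from below by [- xp^2 / (1 - |x|^2) - |p|^2] and using
   Cauchy-Schwarz [xp^2 <= r^2 |p|^2] on the face [|p| = b (1 - r)]. *)
Lemma K_lower : b ^+ 2 * (1 - a) / 4 <= K.
Proof.
have c_ge : - xp ^+ 2 * iv - pp <= c.
  rewrite c_def; have : 0 <= G * S by apply: mulr_ge0; exact: ltW.
  lra.
have iv_face : (1 - r) * (1 + r) * iv = 1 by rewrite -[RHS]iv_def -r_sq; ring.
have iv_face_mul : r ^+ 2 * b ^+ 2 * (1 - r) ^+ 2 * (iv * (1 + r)) = r ^+ 2 * b ^+ 2 * (1 - r).
  transitivity (r ^+ 2 * b ^+ 2 * (1 - r) * ((1 - r) * (1 + r) * iv)); first by ring.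
  by rewrite iv_face mulr1.
have xp_iv : xp ^+ 2 * iv * (1 + r) <= r ^+ 2 * b ^+ 2 * (1 - r).
  have CS : xp ^+ 2 <= r ^+ 2 * b ^+ 2 * (1 - r) ^+ 2.
    by rewrite -mulrA -pp_face r_sq; exact: xp_sq_le.
  have iv1r : 0 <= iv * (1 + r) by move: iv_gt0 r_ge0; nra.
  by have := ler_wpM2r iv1r CS; rewrite iv_face_mul; lra.
have rlam_xF : - (2 * M) <= r * lam * xF.
  by apply: lerNnormlW; have := ler_normM_bound rlam_le1 xF_le; lra.
have : b ^+ 2 * (1 - a) / 2 <= (1 + r) * K.
  have r1r : 0 <= r * (1 + r) by move: r_ge0; nra.
  have c_term := ler_wpM2l r1r c_ge; rewrite pp_face in c_term.
  have xp_term := ler_wpM2l r_ge0 xp_iv.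
  have xF_term : (1 + r) * - (2 * M) <= (1 + r) * (r * lam * xF).
    by apply: ler_wpM2l rlam_xF; move: r_ge0; lra.
  have : b ^+ 2 * (1 - a) <= b ^+ 2 * (1 - r) by apply: ler_wpM2l; [exact: sqr_ge0 | move: r_le_a; lra].
  rewrite (_ : (1 + r) * K = b ^+ 2 * (1 - r) * (1 + r) + r * (1 + r) * c
    + (1 + r) * (r * lam * xF)); last by rewrite /K; ring.
  by move: c_term xp_term xF_term eightM_le r_ge0 r_le1 M_ge0; nra.
have : 0 < b ^+ 2 * (1 - a) by apply: mulr_gt0 => //; exact: exprn_gt0.
by move: r_ge0 r_le1; nra.
Qed.

Lemma xp_small : `|xp| * b <= k.
Proof.
have K_gt0 : 0 < K.
  have : 0 < b ^+ 2 * (1 - a) by apply: mulr_gt0 => //; exact: exprn_gt0.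
  by move: K_lower; lra.
have xpK : `|xp| * K <= 2 * b * M.
  rewrite -(gtr0_norm K_gt0) -normrM xp_K.
  by have := ler_normM_bound rlam_le1 pF_le; lra.
have xp_bound : `|xp| * (b ^+ 2 * (1 - a) / 4) <= 2 * b * M.
  exact: le_trans (ler_wpM2l (normr_ge0 xp) K_lower) xpK.
have b1a_gt0 : 0 < b * (1 - a) by exact: mulr_gt0.
rewrite -(ler_pM2r b1a_gt0) (_ : k * _ = 8 * M * b); last by rewrite -k_def; ring.
by move: xp_bound; lra.
Qed.

Let xp_le1 : `|xp| <= 1.
Proof. by move: xp_small k_le_b b_ge1 (normr_ge0 xp); nra. Qed.
Let xp_sq : xp ^+ 2 = `|xp| ^+ 2. Proof. by rewrite real_normK // num_real. Qed.
Let xp2_b2_le : xp ^+ 2 * b ^+ 2 <= k ^+ 2.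
Proof. by rewrite xp_sq -exprMn; move: xp_small (mulr_ge0 (normr_ge0 xp) (ltW b_gt0)); nra. Qed.
Let xp2_le : xp ^+ 2 <= k ^+ 2.
Proof. by move: xp2_b2_le b2_ge1 (sqr_ge0 xp); nra. Qed.
Let L_ge0 : 0 <= L. Proof. by move: L_ge1; lra. Qed.
Let kL_ge0 : 0 <= k ^+ 2 * L. Proof. exact: mulr_ge0 (sqr_ge0 k) L_ge0. Qed.
Let xp2_iv_le : xp ^+ 2 * iv <= k ^+ 2 * L.
Proof. by rewrite ler_pM // ?sqr_ge0 // ltW. Qed.
Let GS_ge0 : 0 <= G * S. Proof. by rewrite mulr_ge0 // ltW. Qed.

Let dl := G * S - xp ^+ 2 * iv.

Let pdV_eq : p1 * dV1 + p2 * dV2 = dc * xp + c * pp + lam * ((pF + xD) * xp + xF * pp - pD).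
Proof. by rewrite dV1_def dV2_def xp_def pp_def xF_def pD_def; ring. Qed.

Let dxp_eq : dxp = pp + c * xx + lam * xF * (xx - 1).
Proof. by rewrite dxp_def V1_def V2_def xx_def pp_def xF_def; ring. Qed.

Lemma phi2_expand : phi2 =
  8 * b ^+ 6 * (1 - r) ^+ 4 + 8 * b ^+ 4 * (1 - r) * (dl * xx + lam * xF * (xx - 1))
  + 8 * b ^+ 2 * r * (dc * xp + dl * pp + lam * ((pF + xD) * xp + xF * pp - pD))
  - 2 * dA ^+ 2 + 8 * b ^+ 2 * r * (V1 ^+ 2 + V2 ^+ 2).
Proof.
rewrite phi2_def A_face dpV_def.
transitivity (8 * b ^+ 4 * (1 - r) * dxp + 8 * b ^+ 2 * r * (p1 * dV1 + p2 * dV2)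
  - 2 * dA ^+ 2 + 8 * b ^+ 2 * r * (V1 ^+ 2 + V2 ^+ 2)); first by ring.
have c_dl : c = - pp + dl by rewrite c_def /dl; ring.
by rewrite pdV_eq dxp_eq c_dl pp_face -r_sq; ring.
Qed.

Lemma head_lower : - (8 * b ^+ 4 * (k ^+ 2 * L + 2 * M)) <=
  8 * b ^+ 4 * (1 - r) * (dl * xx + lam * xF * (xx - 1)).
Proof.
have xp2_iv_xx : xp ^+ 2 * iv * xx <= k ^+ 2 * L.
  by rewrite -[X in _ <= X]mulr1 ler_pM // mulr_ge0 ?sqr_ge0 // ltW.
have GSxx : 0 <= G * S * xx by exact: mulr_ge0.
have : - (k ^+ 2 * L + 2 * M) <= dl * xx + lam * xF * (xx - 1).
  by move: (lerNnormlW lam_xF_le) xp2_iv_xx GSxx; rewrite /dl; lra.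
move=> Y_ge; have : - (k ^+ 2 * L + 2 * M) <= (1 - r) * (dl * xx + lam * xF * (xx - 1)).
  by move: Y_ge r_ge0 r_le1 kL_ge0 M_ge0; nra.
have b4_ge0 : 0 <= 8 * b ^+ 4 by rewrite mulr_ge0 // exprn_ge0 // ltW.
by move/(ler_wpM2l b4_ge0); lra.
Qed.

Let C3 := G + k ^+ 2 * L + k + 4 * M.
Let C4 := (2 * k + 2 * C3) ^+ 2.
Let C5 := 2 + G + k ^+ 2 * L + 2 * M.
Let C6 := G * L * k ^+ 2 + 2 * k ^+ 2 * C5 * L + 2 * k ^+ 4 * L ^+ 2 + 2 * k * C3.
Let C7 := C6 + k ^+ 2 * L + 2 * M * k + 6 * M.

Let C3_ge0 : 0 <= C3. Proof. by move: G_gt0 M_ge0 k_ge0 kL_ge0; rewrite /C3; lra. Qed.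
Let C5_ge0 : 0 <= C5. Proof. by move: G_gt0 M_ge0 kL_ge0; rewrite /C5; lra. Qed.
Let C6_ge0 : 0 <= C6.
Proof.
have : 0 <= G * L * k ^+ 2 by rewrite !mulr_ge0 ?sqr_ge0 // ltW.
have : 0 <= k ^+ 2 * C5 * L by rewrite !mulr_ge0 ?sqr_ge0.
have : 0 <= k ^+ 4 * L ^+ 2 by rewrite mulr_ge0 ?exprn_ge0 ?sqr_ge0.
have : 0 <= k * C3 by exact: mulr_ge0.
by rewrite /C6; lra.
Qed.

Let G_norm : `|G| <= G. Proof. by rewrite gtr0_norm. Qed.
Let S_norm : `|S| <= 1. Proof. by rewrite gtr0_norm. Qed.
Let lam_norm : `|lam| <= 1. Proof. by rewrite ler_norml lam_le1 andbT; move: lam_ge0; lra. Qed.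
Let xp2_iv_norm : `|xp ^+ 2 * iv| <= k ^+ 2 * L.
Proof. by rewrite ger0_norm // mulr_ge0 ?sqr_ge0 // ltW. Qed.
Let pp_norm : `|pp| <= b ^+ 2. Proof. by rewrite ger0_norm. Qed.

Lemma pV_bound : `|pV| <= b * C3.
Proof.
have ppxp : `|pp * xp| <= b * k.
  rewrite normrM (ger0_norm pp_ge0).
  by move: (ler_wpM2r (normr_ge0 xp) pp_le_b2) xp_small b_gt0; nra.
rewrite (_ : pV = G * S * xp - xp ^+ 2 * iv * xp - pp * xp + lam * xF * xp - lam * pF);
  last by rewrite pV_radial c_def; ring.
have := ler_normD_bound (ler_normD_bound (ler_normD_bound (ler_normD_bound
  (ler_normM_bound (ler_normM_bound G_norm S_norm) xp_le1)
  (ler_normN_bound (ler_normM_bound xp2_iv_norm xp_le1))) (ler_normN_bound ppxp))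
  (ler_normM_bound (ler_normM_bound lam_norm xF_le) xp_le1))
  (ler_normN_bound (ler_normM_bound lam_norm pF_le)).
have : 0 <= (b - 1) * (G + k ^+ 2 * L + 2 * M).
  by rewrite mulr_ge0 //; move: b_ge1 G_gt0 M_ge0 kL_ge0; lra.
by rewrite /C3; lra.
Qed.

Lemma dA_sq_bound : dA ^+ 2 <= b ^+ 4 * C4.
Proof.
have b2xp : `|2 * b ^+ 2 * xp| <= b * (2 * k).
  rewrite normrM ger0_norm; last by rewrite mulr_ge0 ?sqr_ge0.
  by move: (ler_wpM2l (ltW b_gt0) xp_small); lra.
have dA_norm : `|dA| <= b * (2 * k + 2 * C3).
  have two_norm : `|2 : R| <= 2 by rewrite ger0_norm.
  rewrite dA_def; have := ler_normD_bound b2xp (ler_normN_bound (ler_normM_bound two_norm pV_bound)).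
  by lra.
have : dA ^+ 2 <= (b * (2 * k + 2 * C3)) ^+ 2.
  by move: (normr_ge0 dA) dA_norm; rewrite -(real_normK (num_real dA)); nra.
have : b ^+ 2 <= b ^+ 4 by move: b2_ge1; nra.
by rewrite exprMn /C4; move: (sqr_ge0 (2 * k + 2 * C3)); nra.
Qed.

Lemma dxp_bound : `|dxp| <= b ^+ 2 * C5.
Proof.
have c_norm : `|c| <= G + k ^+ 2 * L + b ^+ 2.
  rewrite c_def; have := ler_normD_bound (ler_normD_bound (ler_normM_bound G_norm S_norm)
    (ler_normN_bound xp2_iv_norm)) (ler_normN_bound pp_norm).
  by lra.
have xx_norm : `|xx| <= 1 by rewrite ger0_norm.
rewrite dxp_eq; have := ler_normD_bound (ler_normD_bound pp_norm (ler_normM_bound c_norm xx_norm)) lam_xF_le.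
have : 0 <= (b ^+ 2 - 1) * (G + k ^+ 2 * L + 2 * M).
  by rewrite mulr_ge0 //; move: b2_ge1 G_gt0 M_ge0 kL_ge0; lra.
by rewrite /C5; lra.
Qed.

Lemma dcxp_lower : - C6 <= dc * xp.
Proof.
have iS_ge0 := ltW iS_gt0; have iv_ge0 := ltW iv_gt0; have xp2_ge0 := sqr_ge0 xp.
have G_term : G * xp ^+ 2 * iS <= G * L * k ^+ 2.
  have : xp ^+ 2 * iS <= k ^+ 2 * L by exact: ler_pM xp2_ge0 iS_ge0 xp2_le iS_le_L.
  by move/(ler_wpM2l (ltW G_gt0)); lra.
have dxp_term : xp ^+ 2 * dxp * iv <= k ^+ 2 * C5 * L.
  have : xp ^+ 2 * `|dxp| <= k ^+ 2 * C5.
    apply: le_trans (ler_wpM2l xp2_ge0 dxp_bound) _.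
    by move: (ler_wpM2r C5_ge0 xp2_b2_le); lra.
  move=> xp2_dxp; apply: le_trans (ler_pM _ iv_ge0 xp2_dxp iv_le_L); last first.
    exact: mulr_ge0 xp2_ge0 (normr_ge0 _).
  by rewrite ler_wpM2r // ler_wpM2l // ler_norm.
have iv_term : (xp ^+ 2 * iv) ^+ 2 <= k ^+ 4 * L ^+ 2.
  have : 0 <= xp ^+ 2 * iv by exact: mulr_ge0.
  by rewrite (_ : k ^+ 4 * L ^+ 2 = (k ^+ 2 * L) ^+ 2); [move: xp2_iv_le; nra | ring].
have pV_term : `|xp * pV| <= k * C3.
  rewrite normrM; apply: le_trans (ler_wpM2l (normr_ge0 xp) pV_bound) _.
  by move: (ler_wpM2r C3_ge0 xp_small); lra.
rewrite (_ : dc * xp = - (G * xp ^+ 2 * iS) - 2 * (xp ^+ 2 * dxp * iv)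
  - 2 * (xp ^+ 2 * iv) ^+ 2 - 2 * (xp * pV)); last by rewrite dc_def; ring.
by move: (ler_normlW pV_term); rewrite /C6; lra.
Qed.

Lemma tail_lower :
  - (b ^+ 2 * C7) <= dc * xp + dl * pp + lam * ((pF + xD) * xp + xF * pp - pD).
Proof.
have dl_pp : - (k ^+ 2 * L) <= dl * pp.
  have xp2_pp : xp ^+ 2 * pp <= k ^+ 2.
    exact: le_trans (ler_wpM2l (sqr_ge0 xp) pp_le_b2) xp2_b2_le.
  have := ler_pM (mulr_ge0 (sqr_ge0 _) pp_ge0) (ltW iv_gt0) xp2_pp iv_le_L.
  by move: (mulr_ge0 GS_ge0 pp_ge0); rewrite /dl; lra.
have lam_tail : `|lam * ((pF + xD) * xp + xF * pp - pD)| <= 2 * M * k + 2 * M + 4 * M * b ^+ 2.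
  have pFxD_xp : `|(pF + xD) * xp| <= 2 * M * k + 2 * M.
    have : `|pF * xp| <= 2 * M * k.
      rewrite normrM; apply: le_trans (ler_wpM2r (normr_ge0 xp) pF_le) _.
      have M2_ge0 : 0 <= 2 * M by move: M_ge0; lra.
      by move: (ler_wpM2l M2_ge0 xp_small); lra.
    move=> pF_xp; rewrite mulrDl.
    by apply: le_trans (ler_normD_bound pF_xp (ler_normM_bound xD_le xp_le1)) _; lra.
  have xF_pp : `|xF * pp| <= 2 * M * b ^+ 2 by exact: ler_normM_bound.
  have pD_le_b2 : `|pD| <= 2 * M * b ^+ 2.
    have : b <= b ^+ 2 by move: b_ge1; nra.
    by move: pD_le M_ge0; nra.
  have := ler_normM_bound lam_norm (ler_normD_bound (ler_normD_bound pFxD_xp xF_pp) (ler_normN_bound pD_le_b2)).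
  by lra.
have : 0 <= (b ^+ 2 - 1) * (C6 + k ^+ 2 * L + 2 * M * k + 2 * M).
  by rewrite mulr_ge0 //; move: b2_ge1 C6_ge0 kL_ge0 M_ge0 (mulr_ge0 M_ge0 k_ge0); lra.
by move: dcxp_lower dl_pp (lerNnormlW lam_tail); rewrite /C7; lra.
Qed.

Lemma face_phi2_pos : 0 < phi2.
Proof.
have b2C7 : 0 <= b ^+ 2 * C7.
  by rewrite mulr_ge0 ?sqr_ge0 // /C7; move: C6_ge0 kL_ge0 M_ge0 (mulr_ge0 M_ge0 k_ge0); lra.
have tail8 : - (8 * b ^+ 4 * C7) <=
    8 * b ^+ 2 * r * (dc * xp + dl * pp + lam * ((pF + xD) * xp + xF * pp - pD)).
  have : - (b ^+ 2 * C7) <= r * (dc * xp + dl * pp + lam * ((pF + xD) * xp + xF * pp - pD)).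
    by move: tail_lower b2C7 r_ge0 r_le1; nra.
  have b2_ge0 : 0 <= 8 * b ^+ 2 by move: (sqr_ge0 b); lra.
  by move/(ler_wpM2l b2_ge0); lra.
have lead : 8 * b ^+ 4 * ((k ^+ 2 * L + 2 * M) + C4 / 4 + C7) < 8 * b ^+ 6 * (1 - r) ^+ 4.
  have r_a4 : (1 - a) ^+ 4 <= (1 - r) ^+ 4.
    by rewrite lerXn2r ?nnegrE //; move: r_le_a r_le1 a_lt1; lra.
  have b4_gt0 : 0 < 8 * b ^+ 4 by rewrite mulr_gt0 // exprn_gt0.
  have := ler_wpM2l (ltW b4_gt0) (ler_wpM2l (sqr_ge0 b) r_a4).
  have : 8 * b ^+ 4 * ((k ^+ 2 * L + 2 * M) + C4 / 4 + C7) < 8 * b ^+ 4 * (b ^+ 2 * (1 - a) ^+ 4).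
    by rewrite ltr_pM2l.
  by lra.
have V_ge0 : 0 <= 8 * b ^+ 2 * r * (V1 ^+ 2 + V2 ^+ 2).
  by rewrite mulr_ge0 ?addr_ge0 ?sqr_ge0 // mulr_ge0 // mulr_ge0 // sqr_ge0.
by rewrite phi2_expand; move: head_lower tail8 dA_sq_bound; lra.
Qed.

End FaceEstimate.

Section Trajectories.
Variable R : realType.
Notation pt := 'rV[R]_5.

Lemma nx2_ge0 (z : pt) : 0 <= nx2 z.
Proof. by rewrite addr_ge0 // sqr_ge0. Qed.
Lemma np2_ge0 (z : pt) : 0 <= np2 z.
Proof. by rewrite addr_ge0 // sqr_ge0. Qed.
Lemma normx_ge0 (z : pt) : 0 <= normx z.
Proof. exact: sqrtr_ge0. Qed.
Lemma normp_ge0 (z : pt) : 0 <= normp z.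
Proof. exact: sqrtr_ge0. Qed.
Lemma normx_sq (z : pt) : normx z ^+ 2 = nx2 z.
Proof. by rewrite sqr_sqrtr // nx2_ge0. Qed.
Lemma normp_sq (z : pt) : normp z ^+ 2 = np2 z.
Proof. by rewrite sqr_sqrtr // np2_ge0. Qed.

Lemma trajectory_coord_is_derive (v : pt -> pt) (z : pt) (eps s : R) (g : R -> pt) (i : 'I_5) :
  trajectory v z eps g -> - eps < s < eps ->
  is_derive s 1 (fun u => g u ord0 i) (v (g s) ord0 i).
Proof.
by move=> [_ g_sol] /g_sol[_ [dg <-]]; exact: is_derive_coord.
Qed.

Lemma trajectory_nx2_lt1 (v : pt -> pt) (z : pt) (eps s : R) (g : R -> pt) :
  trajectory v z eps g -> - eps < s < eps -> nx2 (g s) < 1.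
Proof.
move=> [_ g_sol] /g_sol[gs_in _]; rewrite -normx_sq.
by move: gs_in (normx_ge0 (g s)); rewrite /RxOmega /=; nra.
Qed.

Lemma trajectory_leaves_sphere (G : R) (F : R -> 'rV[R]_2) (lam a b eps : R) (g : R -> pt) :
  (forall t, derivable F t 1) -> 0 < a < 1 -> 0 < eps ->
  curvature_bound_function (@RxOmega R) (vfield G F lam) (m_a a) ->
  trajectory (vfield G F lam) (g 0) eps g ->
  (forall s, - eps < s < eps -> (Gamma_a a `&` Delta_b b) (g s)) ->
  normx (g 0) = a -> False.
Proof.
move=> dF /andP[a_gt0 a_lt1] eps_gt0 [_ [_ [_ m_curv]]] g_traj g_in x_eq_a.
set v := vfield G F lam.
have eps0 : - eps < 0 < eps by apply/andP; split; lra.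
have dg i s := trajectory_coord_is_derive i g_traj (s := s).
have dnx2 s : - eps < s < eps -> is_derive s 1 (fun u => nx2 (g u))
    (2 * zx1 (g s) * zp1 (g s) + 2 * zx2 (g s) * zp2 (g s)).
  move=> s_in; apply: is_derive1_congr (is_derive1D (is_derive1_sqr (dg (inord 1) s s_in))
    (is_derive1_sqr (dg (inord 2) s s_in))) _ _ => //.
  by rewrite /v vfield1E vfield2E.
have nx2_max s : - eps < s < eps -> nx2 (g s) <= nx2 (g 0).
  move=> /g_in[/= gs_le _]; rewrite -!normx_sq x_eq_a.
  by move: gs_le (normx_ge0 (g s)); rewrite /Gamma_a /=; nra.
have d2nx2 := is_derive1D
  (is_derive1M (is_derive1M (is_derive1_cst 0 2) (dg (inord 1) 0 eps0)) (dg (inord 3) 0 eps0))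
  (is_derive1M (is_derive1M (is_derive1_cst 0 2) (dg (inord 2) 0 eps0)) (dg (inord 4) 0 eps0)).
have [tangent d2_le0] := local_max_second_derivative eps_gt0 dnx2 nx2_max d2nx2.
have g0_in : RxOmega (g 0) by rewrite /RxOmega /= x_eq_a.
have m0 : m_a a (g 0) = 0 by rewrite /m_a -normx_sq x_eq_a; ring.
have Dm0 : De (m_a a) (g 0) (v (g 0)) = 0.
  by rewrite De_m_a /v vfield1E vfield2E; move: tangent; lra.
have x_lt1 : nx2 (g 0) < 1 by rewrite -normx_sq x_eq_a; nra.
have := m_curv _ g0_in m0 Dm0; rewrite D2e_m_a De_m_a.
have [-> ->] := Dvfield_x G lam (v (g 0)) (dF (zt (g 0))) x_lt1.
by rewrite /v vfield1E vfield2E /zx1 /zx2 /zp1 /zp2 in d2_le0 *; lra.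
Qed.

End Trajectories.

Section FaceFunction.
Variable R : realType.
Notation pt := 'rV[R]_5.
Implicit Types (b : R) (z : pt) (v : pt -> pt).

(* A smooth substitute for [b |x| + |p| - b]: it equals
   [(|p|^2 - b^2 (1 - |x|)^2) (2 b^2 |x| + A)] with [A = b^2 (1 + |x|^2) - |p|^2],
   so it is [<= 0] on [Delta_b] and vanishes on the face [b |x| + |p| = b]. *)
Definition face_phi b z : R :=
  4 * b ^+ 4 * nx2 z - (b ^+ 2 * (1 + nx2 z) - np2 z) ^+ 2.

Lemma face_phi_le0 b z : 0 < b -> b * normx z + normp z <= b -> face_phi b z <= 0.
Proof.
move=> b_gt0; rewrite /face_phi -normx_sq -normp_sq.
move: (normx_ge0 z) (normp_ge0 z); set r := normx z; set rho := normp z => r_ge0 rho_ge0 face.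
have rho2 : rho ^+ 2 <= b ^+ 2 * (1 - r) ^+ 2.
  by rewrite -exprMn; move: rho_ge0 face; nra.
have A_ge : 2 * b ^+ 2 * r <= b ^+ 2 * (1 + r ^+ 2) - rho ^+ 2.
  by move: rho2; rewrite (_ : b ^+ 2 * (1 - r) ^+ 2 = b ^+ 2 * (1 + r ^+ 2) - 2 * b ^+ 2 * r); [lra | ring].
have : 0 <= 2 * b ^+ 2 * r by rewrite mulr_ge0 // mulr_ge0 // sqr_ge0.
rewrite (_ : 4 * b ^+ 4 * r ^+ 2 = (2 * b ^+ 2 * r) ^+ 2); last by ring.
by move: A_ge; nra.
Qed.

Lemma face_phi_eq0 b z : b * normx z + normp z = b -> face_phi b z = 0.
Proof.
rewrite /face_phi -normx_sq -normp_sq => face.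
by rewrite (_ : normp z = b - b * normx z); [ring | lra].
Qed.

Definition face_phi_deriv v b z : R :=
  let dr2 := 2 * xdotp z in
  let dp2 := 2 * (zp1 z * v z ord0 (inord 3) + zp2 z * v z ord0 (inord 4)) in
  4 * b ^+ 4 * dr2 - 2 * (b ^+ 2 * (1 + nx2 z) - np2 z) * (b ^+ 2 * dr2 - dp2).

Definition face_phi_deriv2 b z (V1 V2 dV1 dV2 : R) : R :=
  let xp := xdotp z in
  let pV := zp1 z * V1 + zp2 z * V2 in
  let dxp := zp1 z * zp1 z + zx1 z * V1 + zp2 z * zp2 z + zx2 z * V2 in
  let dpV := V1 ^+ 2 + V2 ^+ 2 + zp1 z * dV1 + zp2 z * dV2 in
  let dA := 2 * b ^+ 2 * xp - 2 * pV in
  8 * b ^+ 4 * dxp - 2 * dA ^+ 2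
  - 2 * (b ^+ 2 * (1 + nx2 z) - np2 z) * (2 * b ^+ 2 * dxp - 2 * dpV).

Section AlongCurve.
Variables (v : pt -> pt) (b : R) (g : R -> pt).
Hypotheses (v_x1 : forall y, v y ord0 (inord 1) = zp1 y) (v_x2 : forall y, v y ord0 (inord 2) = zp2 y).

Lemma is_derive_face_phi (s : R) :
  (forall i : 'I_5, is_derive s 1 (fun u => g u ord0 i) (v (g s) ord0 i)) ->
  is_derive s 1 (fun u => face_phi b (g u)) (face_phi_deriv v b (g s)).
Proof.
move=> dg.
have dx2 := is_derive1D (is_derive1_sqr (dg (inord 1))) (is_derive1_sqr (dg (inord 2))).
have dp2 := is_derive1D (is_derive1_sqr (dg (inord 3))) (is_derive1_sqr (dg (inord 4))).
have dA := is_derive1B (is_derive1M (is_derive1_cst s (b ^+ 2))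
  (is_derive1D (is_derive1_cst s 1) dx2)) dp2.
apply: is_derive1_congr (is_derive1B (is_derive1M (is_derive1_cst s (4 * b ^+ 4)) dx2)
  (is_derive1_sqr dA)) _ _ => //.
by rewrite /face_phi_deriv v_x1 v_x2 /xdotp /nx2 /np2 /zx1 /zx2 /zp1 /zp2 /=; ring.
Qed.

Lemma is_derive_face_phi_deriv (dV1 dV2 : R) :
  (forall i : 'I_5, is_derive (0 : R) 1 (fun u => g u ord0 i) (v (g 0) ord0 i)) ->
  is_derive (0 : R) 1 (fun u => v (g u) ord0 (inord 3)) dV1 ->
  is_derive (0 : R) 1 (fun u => v (g u) ord0 (inord 4)) dV2 ->
  is_derive (0 : R) 1 (fun u => face_phi_deriv v b (g u))
    (face_phi_deriv2 b (g 0) (v (g 0) ord0 (inord 3)) (v (g 0) ord0 (inord 4)) dV1 dV2).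
Proof.
move=> dg dV3 dV4.
have dx1 := dg (inord 1); have dx2 := dg (inord 2).
have dp1 := dg (inord 3); have dp2 := dg (inord 4).
rewrite v_x1 in dx1; rewrite v_x2 in dx2.
have two := is_derive1_cst 0 (2 : R).
have ddr2 := is_derive1D (is_derive1M (is_derive1M two dx1) dp1) (is_derive1M (is_derive1M two dx2) dp2).
have ddp2 := is_derive1D (is_derive1M (is_derive1M two dp1) dV3) (is_derive1M (is_derive1M two dp2) dV4).
have dA := is_derive1B (is_derive1M (is_derive1_cst 0 (b ^+ 2))
  (is_derive1D (is_derive1_cst 0 1) (is_derive1D (is_derive1_sqr dx1) (is_derive1_sqr dx2))))
  (is_derive1D (is_derive1_sqr dp1) (is_derive1_sqr dp2)).
apply: is_derive1_congr (is_derive1B (is_derive1M (is_derive1_cst 0 (4 * b ^+ 4)) ddr2)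
  (is_derive1M (is_derive1M two dA) (is_derive1B (is_derive1M (is_derive1_cst 0 (b ^+ 2)) ddr2) ddp2))) _ _.
  by rewrite funeqE => u; rewrite /face_phi_deriv /xdotp /nx2 /np2 /zx1 /zx2 /zp1 /zp2 /=; ring.
by rewrite /face_phi_deriv2 /xdotp /nx2 /np2 /zx1 /zx2 /zp1 /zp2 /=; ring.
Qed.

End AlongCurve.
End FaceFunction.

Section FaceConvexity.
Variable R : realType.
Notation pt := 'rV[R]_5.

Lemma face_phi_deriv2_pos (G : R) (F : R -> 'rV[R]_2) (lam a b M : R) (z : pt) :
  0 < G -> 0 <= lam <= 1 -> 0 < a < 1 -> 0 <= M ->
  (forall k : 'I_2, `|F (zt z) ord0 k| <= M /\ `|'D_1 F (zt z) ord0 k| <= M) ->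
  1 <= b -> 8 * M / (1 - a) <= b ->
  Cbig G M (1 - a ^+ 2)^-1 (8 * M / (1 - a)) < b ^+ 2 * (1 - a) ^+ 4 ->
  normx z < a -> b * normx z + normp z = b ->
  let v := vfield G F lam in
  let V k := v z ord0 k in
  let D k := ('D_1 F (zt z) : 'rV[R]_2) ord0 k in
  let dV X k := accel_deriv G lam (zx1 z) (zx2 z) (zp1 z) (zp2 z)
    (F (zt z) ord0 (inord 0)) (F (zt z) ord0 (inord 1)) (D (inord 0)) (D (inord 1))
    (V (inord 0)) (V (inord 1)) (V (inord 2)) (V (inord 3)) (V (inord 4))
    (z ord0 X) (V X) (F (zt z) ord0 k) (D k) in
  face_phi_deriv v b z = 0 ->
  0 < face_phi_deriv2 b z (V (inord 3)) (V (inord 4))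
        (dV (inord 1) (inord 0)) (dV (inord 2) (inord 1)).
Proof.
move=> G_gt0 /andP[lam_ge0 lam_le1] /andP[a_gt0 a_lt1] M_ge0 FM b_ge1 k_le_b b_large.
move=> x_lt_a on_face v V D dV tangent.
have xx_lt1 : nx2 z < 1 by rewrite -normx_sq; move: x_lt_a a_lt1 (normx_ge0 z); nra.
have S_gt0 : 0 < Num.sqrt (1 - nx2 z) by rewrite sqrtr_gt0 subr_gt0.
have one_sub_xx : 1 - nx2 z != 0 by rewrite gt_eqF // subr_gt0.
rewrite /dV /V /v vfield0E vfield1E vfield2E.
(* [xF, pF, xD, pD] and the data after [c] are left to unification: [=> //] solves
   their defining equations by instantiating them. *)
apply: (@face_phi2_pos R G lam a b M (1 - a ^+ 2)^-1 (8 * M / (1 - a)) (zx1 z) (zx2 z)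
  (zp1 z) (zp2 z) (F (zt z) ord0 (inord 0)) (F (zt z) ord0 (inord 1)) (D (inord 0)) (D (inord 1))
  (normx z) (normp z) (Num.sqrt (1 - nx2 z)) (Num.sqrt (1 - nx2 z))^-1 (1 - nx2 z)^-1
  (nx2 z) (np2 z) (xdotp z) _ _ _ _ (radial_coef G (zx1 z) (zx2 z) (zp1 z) (zp2 z))) => //.
- by have [] := FM (inord 0).
- by have [] := FM (inord 1).
- by have [] := FM (inord 0).
- by have [] := FM (inord 1).
- by rewrite mulVf // gt_eqF // subr_gt0; move: a_gt0 a_lt1; nra.
- by rewrite divfK // subr_eq0 eq_sym lt_eqF.
- exact: normx_ge0.
- exact: ltW.
- exact: normx_sq.
- exact: normp_sq.
- by rewrite sqr_sqrtr // subr_ge0 ltW.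
- by rewrite mulfV // gt_eqF.
- by rewrite mulfV.
- by rewrite -tangent /face_phi_deriv /v vfield3E vfield4E /accel; ring.
- rewrite /face_phi_deriv2 /accel_deriv /radial_coef_deriv /xdotp vfield3E vfield4E /accel.
  move: one_sub_xx S_gt0; rewrite /nx2 /np2 /zx1 /zx2 /zp1 /zp2 /= => xx_neq1 S_gt0.
  by field; rewrite xx_neq1 gt_eqF.
Qed.

End FaceConvexity.

Section BoundSet.
Variable R : realType.
Notation pt := 'rV[R]_5.

Lemma trajectory_leaves_face (G : R) (F : R -> 'rV[R]_2) (lam a b eps M : R) (g : R -> pt) :
  0 < G -> 0 <= lam <= 1 -> 0 < a < 1 -> 0 <= M -> (forall t, derivable F t 1) ->
  (forall t (k : 'I_2), `|F t ord0 k| <= M /\ `|'D_1 F t ord0 k| <= M) ->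
  1 <= b -> 8 * M / (1 - a) <= b ->
  Cbig G M (1 - a ^+ 2)^-1 (8 * M / (1 - a)) < b ^+ 2 * (1 - a) ^+ 4 ->
  0 < eps -> trajectory (vfield G F lam) (g 0) eps g ->
  (forall s, - eps < s < eps -> (Gamma_a a `&` Delta_b b) (g s)) ->
  normx (g 0) < a -> b * normx (g 0) + normp (g 0) = b -> False.
Proof.
move=> G_gt0 lam01 a01 M_ge0 dF FM b_ge1 k_le_b b_large eps_gt0 g_traj g_in x_lt_a on_face.
set v := vfield G F lam.
have eps0 : - eps < 0 < eps by apply/andP; split; lra.
have dg s i (s_in : - eps < s < eps) := trajectory_coord_is_derive i g_traj s_in.
have dphi s : - eps < s < eps ->
    is_derive s 1 (fun u => face_phi b (g u)) (face_phi_deriv v b (g s)).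
  move=> s_in; apply: (is_derive_face_phi b (vfield1E G F lam) (vfield2E G F lam)).
  by move=> i; exact: dg.
have phi_max s : - eps < s < eps -> face_phi b (g s) <= face_phi b (g 0).
  move=> /g_in[_ [_ face_le]]; rewrite (face_phi_eq0 on_face).
  by apply: (face_phi_le0 _ face_le); lra.
have [dV3 dV4] := is_derive_vfield_accel G lam (fun i => dg 0 i eps0) (dF _)
  (trajectory_nx2_lt1 g_traj eps0).
have d2phi := is_derive_face_phi_deriv b (vfield1E G F lam) (vfield2E G F lam)
  (fun i => dg 0 i eps0) dV3 dV4.
have [tangent] := local_max_second_derivative eps_gt0 dphi phi_max d2phi.
rewrite leNgt => /negP; apply.
exact: (face_phi_deriv2_pos G_gt0 lam01 a01 M_ge0 (FM _) b_ge1 k_le_b b_large x_lt_a on_face).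
Qed.

End BoundSet.

Lemma large_radius (R : realType) (G M a : R) : 0 < a < 1 -> 0 <= M ->
  exists b, [/\ 1 <= b, 8 * M / (1 - a) <= b &
    Cbig G M (1 - a ^+ 2)^-1 (8 * M / (1 - a)) < b ^+ 2 * (1 - a) ^+ 4].
Proof.
move=> /andP[a_gt0 a_lt1] M_ge0.
set k := 8 * M / (1 - a); set C := Cbig _ _ _ _.
have a4_gt0 : 0 < (1 - a) ^+ 4 by rewrite exprn_gt0 // subr_gt0.
have k_ge0 : 0 <= k by rewrite divr_ge0 //; lra.
have C_ge0 : 0 <= (`|C| + 1) / (1 - a) ^+ 4.
  by rewrite divr_ge0 ?ltW // addr_ge0.
exists (1 + k + (`|C| + 1) / (1 - a) ^+ 4); split; [lra | lra |].
set b := 1 + k + _.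
have : `|C| + 1 <= b * (1 - a) ^+ 4 by rewrite -ler_pdivrMr // /b; lra.
have : b <= b ^+ 2 by rewrite /b; nra.
by move: (ler_norm C) a4_gt0; nra.
Qed.

Theorem lemma4p2 (R : realType) (G T : R) (F : R -> 'rV[R]_2) (a : R) :
  0 < G -> 0 < T -> Tperiodic T F -> C1_fun F -> 0 < a < 1 ->
  (forall lam : R, 0 <= lam <= 1 ->
     curvature_bound_function (@RxOmega R) (vfield G F lam) (m_a a)) ->
  exists b : R, 0 < b /\
    forall lam : R, 0 <= lam <= 1 ->
      bound_set (vfield G F lam) (Gamma_a a `&` Delta_b b).
Proof.
move=> G_gt0 T_gt0 FT F_C1 a01 m_curv.
have [a_gt0 a_lt1] : 0 < a /\ a < 1 by apply/andP.
have [M [M_ge0 FM]] := periodic_C1_bounded T_gt0 FT F_C1.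
have [b [b_ge1 k_le_b b_large]] := large_radius G a01 M_ge0.
exists b; split => [|lam lam01]; first lra.
split; first exact: closed_Gamma_Delta.
split=> [z [_ []] //|eps eps_gt0 [z [g [z_bdry [g_traj g_in]]]]].
have g0 : g 0 = z by case: g_traj.
have [_] := bdry_Gamma_Delta a_lt1 z_bdry; rewrite -g0 in g_traj * => -[x_eq_a|[x_lt_a on_face]].
  exact: trajectory_leaves_sphere F_C1.1 a01 eps_gt0 (m_curv lam lam01) g_traj g_in x_eq_a.
exact: trajectory_leaves_face G_gt0 lam01 a01 M_ge0 F_C1.1 FM b_ge1 k_le_b b_large
  eps_gt0 g_traj g_in x_lt_a on_face.
Qed.
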